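(* Let $\mathbb{F}$ be a field, $n\ge 1$, and $A,B\in M(n,\mathbb{F})$. Then $A\sim_{M(n,\mathbb{F})} B$ if and only if $A_s$ and $B_s$ are conjugate by an invertible matrix, i.e. there exists $g\in \mathrm{GL}(n,\mathbb{F})$ with $B_s=gA_sg^{-1}$.
   Context: $M(n,\mathbb{F})$ denotes the semigroup of all $n\times n$ matrices over $\mathbb{F}$ under ordinary matrix multiplication, identified with linear operators on $\mathbb{F}^n$; its group of units is $\mathrm{GL}(n,\mathbb{F})$. Two elements $a,b$ of a semigroup $S$ are primarily $S$-conjugated if there are $x,y\in S$ with $a=xy$ and $b=yx$; the relation $\sim_S$ ($S$-conjugacy) is the transitive closure of primary $S$-conjugacy. For $A\in M(n,\mathbb{F})$ let $t\ge 0$ be such that $A^t(\mathbb{F}^n)=A^{t+i}(\mathbb{F}^n)$ for all $i\ge 0$ (such $t$ exists, e.g. $t=n$); then $\mathbb{F}^n=A^t(\mathbb{F}^n)\oplus\ker(A^t)$, and $A_s$ denotes the linear operator with $A_s(v)=A(v)$ for $v\in A^t(\mathbb{F}^n)$ and $A_s(v)=0$ for $v\in\ker(A^t)$ (this does not depend on the choice of such $t$). *)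

From HB Require Import structures.
From mathcomp Require Import all_boot all_order all_algebra.
From Stdlib Require Import Relations.
Set Implicit Arguments. Unset Strict Implicit. Unset Printing Implicit Defensive.
Import GRing.Theory.
Local Open Scope ring_scope.

(* Matrices act on row vectors: the operator of A is v |-> v *m A. *)

Definition prim_conj (F : fieldType) (n : nat) (a b : 'M[F]_n) : Prop :=
  exists x y : 'M[F]_n, a = x *m y /\ b = y *m x.

Definition mx_conj (F : fieldType) (n : nat) : relation 'M[F]_n :=
  clos_trans _ (@prim_conj F n).

(* A_s : acts as A on Im(A^n) and as 0 on ker(A^n) (t = n works).
   proj_mx U V is the projection onto U along V. *)
Definition Ss (F : fieldType) (n : nat) (A : 'M[F]_n) : 'M[F]_n :=
  proj_mx (A ^+ n) (kermx (A ^+ n)) *m A.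

(* Write U_A = Im(A^n) and K_A = ker(A^n), so that F^n = U_A (+) K_A and A_s
   is A on U_A and 0 on K_A.  For a primary conjugate pair XY, YX the map X
   sends U_XY isomorphically onto U_YX and intertwines XY with YX there, while
   K_XY and K_YX have the same dimension; patching X on U_XY with any
   isomorphism K_XY -> K_YX gives an invertible g with g (YX)_s = (XY)_s g.
   Conversely, replacing A by P A, where P is a projection onto Im A, is a
   primary conjugation (A = A P) and lowers the rank until rank A^2 = rank A,
   i.e. until A = A_s; hence A is S-conjugate to A_s, and similar matrices are
   primarily conjugate. *)

From HB Require Import structures.
From mathcomp Require Import all_boot all_order all_algebra.
From Stdlib Require Import Relations.
Set Implicit Arguments. Unset Strict Implicit. Unset Printing Implicit Defensive.
Import GRing.Theory.
Local Open Scope ring_scope.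

Lemma clos_rt_sym (T : Type) (R : relation T) :
  symmetric T R -> forall x y, clos_refl_trans T R x y -> clos_refl_trans T R y x.
Proof.
move=> symR x y; elim=> [a b /symR|a|a b c _ IHab _ IHbc].
- exact: rt_step.
- exact: rt_refl.
- exact: rt_trans IHbc IHab.
Qed.

Lemma clos_t_rt (T : Type) (R : relation T) x y z :
  clos_trans T R x y -> clos_refl_trans T R y z -> clos_trans T R x z.
Proof.
move=> Rxy Ryz; elim: Ryz x Rxy => [a b Rab|//|a b c _ IHab _ IHbc] x Rxa.
- exact: t_trans Rxa (t_step _ _ _ _ Rab).
- exact/IHbc/IHab.
Qed.

Lemma mxrank_eq_iso (F : fieldType) m1 m2 n (U : 'M[F]_(m1, n)) (V : 'M[F]_(m2, n)) :
    \rank U = \rank V ->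
  exists2 T : 'M[F]_n, (T <= V)%MS &
    forall m (W : 'M[F]_(m, n)), (W <= U)%MS -> W *m T = 0 -> W = 0.
Proof.
move=> rkUV; pose V' := castmx (esym rkUV, erefl n) (row_base V).
have freeV' : row_free V' by rewrite /row_free eqmx_cast eq_row_base rkUV.
exists (pinvmx (row_base U) *m V').
  by rewrite (submx_trans (submxMl _ _)) // eqmx_cast eq_row_base.
move=> m W sWU; rewrite mulmxA => /eqP; rewrite mulmx_free_eq0 // => /eqP WU0.
have sWbU : (W <= row_base U)%MS by rewrite eq_row_base.
by rewrite -(mulmxKpV sWbU) WU0 mul0mx.
Qed.

Section Fitting.
Variables (F : fieldType) (n : nat).
Implicit Types A X Y : 'M[F]_n.

Lemma mulmx_exprC X Y k : (X *m Y) ^+ k *m X = X *m (Y *m X) ^+ k.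
Proof.
elim: k => [|k IHk]; first by rewrite !expr0 mul1mx mulmx1.
by rewrite !exprSr -!mulmxE !mulmxA IHk.
Qed.

Lemma eqmx_expr_stable A k :
  \rank (A ^+ k.+1) = \rank (A ^+ k) -> forall d, (A ^+ (k + d) == A ^+ k)%MS.
Proof.
move=> rkA; have AkS : (A ^+ k.+1 == A ^+ k)%MS.
  have subAk : (A ^+ k.+1 <= A ^+ k)%MS by rewrite exprS -mulmxE submxMl.
  by rewrite -(mxrank_leqif_eq subAk) rkA.
elim=> [|d IHd]; first by rewrite addn0 submx_refl.
rewrite addnS exprSr -mulmxE; apply/eqmxP.
apply: eqmx_trans (eqmxMr A (eqmxP IHd)) _.
by rewrite mulmxE -exprSr; apply/eqmxP.
Qed.

Lemma exists_mxrank_exprS_eq A :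
  exists2 k, (k <= n)%N & \rank (A ^+ k.+1) = \rank (A ^+ k).
Proof.
have rk_drop k : (\rank (A ^+ k) + k <= n)%N \/
    exists2 j, (j < k)%N & \rank (A ^+ j.+1) = \rank (A ^+ j).
  elim: k => [|k [rkAk|[j ltjk rkAj]]].
  - by left; rewrite expr0 addn0 mxrank1.
  - have := mxrankM_maxr A (A ^+ k); rewrite mulmxE -exprS.
    rewrite leq_eqVlt => /orP[/eqP rkAk1|ltAk]; first by right; exists k.
    by left; rewrite addnS (leq_trans _ rkAk) // ltn_add2r.
  - by right; exists j => //; apply: ltnW.
have [|[k]] := rk_drop n.+1; last by exists k.
by rewrite addnS ltnNge leq_addl.
Qed.

Lemma eqmx_expr_fitting A d : (A ^+ (n + d) == A ^+ n)%MS.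
Proof.
have [k le_kn rkA] := exists_mxrank_exprS_eq A.
have := eqmx_expr_stable rkA (n + d - k); have := eqmx_expr_stable rkA (n - k).
rewrite subnKC // addnC subnK ?(leq_trans le_kn (leq_addr _ _)) //.
move=> /eqmxP eq_nk /eqmxP eq_ndk.
by apply/eqmxP; apply: eqmx_trans eq_ndk (eqmx_sym eq_nk).
Qed.

Lemma fitting_cap0 A : (A ^+ n :&: kermx (A ^+ n))%MS = 0.
Proof.
apply/eqP; rewrite -mxrank_eq0.
have := mxrank_mul_ker (A ^+ n) (A ^+ n).
rewrite mulmxE -exprD (eqmx_rank (eqmx_expr_fitting A n)) => /eqP.
by rewrite -[X in _ == X]addn0 eqn_add2l.
Qed.

Lemma fitting_sum_full A m (W : 'M[F]_(m, n)) : (W <= A ^+ n + kermx (A ^+ n))%MS.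
Proof.
apply: submx_full; rewrite /row_full.
have := mxrank_sum_cap (A ^+ n) (kermx (A ^+ n)).
rewrite fitting_cap0 mxrank0 addn0 mxrank_ker => ->.
by rewrite subnKC // rank_leq_col.
Qed.

Lemma kermx_sub_fitting A : (kermx A <= kermx (A ^+ n))%MS.
Proof.
rewrite sub_kermx; case: n A => [|n'] A; first by rewrite thinmx0.
by rewrite exprS -mulmxE mulmxA mulmx_ker mul0mx.
Qed.

Lemma fitting_mul_eq0 A m (W : 'M[F]_(m, n)) :
  (W <= A ^+ n)%MS -> W *m A = 0 -> W = 0.
Proof.
move=> sWU WA0; apply/eqP; rewrite -submx0 -(fitting_cap0 A) sub_capmx sWU /=.
by apply: submx_trans (kermx_sub_fitting A); rewrite sub_kermx WA0.
Qed.

Lemma fitting_mulmx_sub X Y m (W : 'M[F]_(m, n)) :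
  (W <= (X *m Y) ^+ n)%MS -> (W *m X <= (Y *m X) ^+ n)%MS.
Proof. by move=> sWU; rewrite (submx_trans (submxMr X sWU)) // mulmx_exprC submxMl. Qed.

Lemma fitting_mulmx_eq0 X Y m (W : 'M[F]_(m, n)) :
  (W <= (X *m Y) ^+ n)%MS -> W *m X = 0 -> W = 0.
Proof. by move=> sWU WX0; apply: (fitting_mul_eq0 sWU); rewrite mulmxA WX0 mul0mx. Qed.

Lemma mxrank_fitting_mulmxC X Y : \rank ((X *m Y) ^+ n) = \rank ((Y *m X) ^+ n).
Proof.
suff le_rk X' Y' : (\rank ((X' *m Y') ^+ n) <= \rank ((Y' *m X') ^+ n))%N.
  by apply/eqP; rewrite eqn_leq !le_rk.
have cap0 : ((X' *m Y') ^+ n :&: kermx X')%MS = 0.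
  by apply: (fitting_mulmx_eq0 (capmxSl _ _)); apply/sub_kermxP; apply: capmxSr.
have := mxrank_mul_ker ((X' *m Y') ^+ n) X'; rewrite cap0 mxrank0 addn0 => <-.
by apply: mxrankS; apply: fitting_mulmx_sub.
Qed.

Definition fitting_proj A := proj_mx (A ^+ n) (kermx (A ^+ n)).

Lemma SsE A : Ss A = fitting_proj A *m A.
Proof. by []. Qed.

Lemma fitting_proj_sub A m (W : 'M[F]_(m, n)) : (W *m fitting_proj A <= A ^+ n)%MS.
Proof. exact: proj_mx_sub. Qed.

Lemma fitting_proj_compl_sub A m (W : 'M[F]_(m, n)) :
  (W - W *m fitting_proj A <= kermx (A ^+ n))%MS.
Proof. exact/proj_mx_compl_sub/fitting_sum_full. Qed.

Lemma fitting_proj_id A m (W : 'M[F]_(m, n)) :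
  (W <= A ^+ n)%MS -> W *m fitting_proj A = W.
Proof. exact/proj_mx_id/fitting_cap0. Qed.

Lemma fitting_proj_0 A m (W : 'M[F]_(m, n)) :
  (W <= kermx (A ^+ n))%MS -> W *m fitting_proj A = 0.
Proof. exact/proj_mx_0/fitting_cap0. Qed.

Lemma Ss_id A : \rank (A *m A) = \rank A -> Ss A = A.
Proof.
move=> rkA; have [n0|n_gt0] := posnP n.
  by apply/matrixP => i; have := ltn_ord i; rewrite {2}n0.
have rkA1 : \rank (A ^+ 1.+1) = \rank (A ^+ 1) by rewrite expr2 -mulmxE.
have eqUA := eqmx_expr_stable rkA1 (n - 1).
rewrite expr1 subnKC // in eqUA.
have eqKA : (kermx A == kermx (A ^+ n))%MS.
  by rewrite -(mxrank_leqif_eq (kermx_sub_fitting _)) !mxrank_ker (eqmx_rank eqUA).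
have : (1%:M - 1%:M *m fitting_proj A) *m A = 0.
  apply/sub_kermxP; apply: submx_trans (fitting_proj_compl_sub _ _) _.
  by case/andP: eqKA.
by rewrite SsE mul1mx mulmxBl mul1mx => /eqP; rewrite subr_eq0 => /eqP.
Qed.

End Fitting.

Section FittingPatch.
Variables (F : fieldType) (n : nat) (X Y T : 'M[F]_n).
Let A := X *m Y.
Let B := Y *m X.
Let P := fitting_proj A.
Hypothesis sub_T : (T <= kermx (B ^+ n))%MS.
Hypothesis inj_T :
  forall m (W : 'M[F]_(m, n)), (W <= kermx (A ^+ n))%MS -> W *m T = 0 -> W = 0.

Let mulT_sub m (W : 'M[F]_(m, n)) : (W *m T <= kermx (B ^+ n))%MS.
Proof. exact: submx_trans (submxMl W T) sub_T. Qed.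

Let g := P *m X + (1%:M - P) *m T.

Lemma fitting_patch_unitmx : g \in unitmx.
Proof.
rewrite -row_free_unit -kermx_eq0.
have := mulmx_ker g; rewrite mulmxDr 2!(mulmxA (kermx g)); set K := kermx g => Kg0.
have KPX0 : K *m P *m X = 0.
  apply/eqP; rewrite -submx0 -(fitting_cap0 B) sub_capmx.
  rewrite fitting_mulmx_sub ?fitting_proj_sub //=.
  by move/eqP: Kg0; rewrite addr_eq0 => /eqP->; rewrite eqmx_opp mulT_sub.
have KP0 : K *m P = 0 := fitting_mulmx_eq0 (fitting_proj_sub _ _) KPX0.
have KQ0 : K *m (1%:M - P) = 0.
  apply: inj_T; last by move: Kg0; rewrite KPX0 add0r.
  by rewrite mulmxBr mulmx1 fitting_proj_compl_sub.
by move: KQ0; rewrite mulmxBr mulmx1 KP0 subr0 => ->.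
Qed.

Lemma fitting_patch_conj : g *m Ss B = Ss A *m g.
Proof.
have PXPB : P *m X *m fitting_proj B = P *m X.
  by apply/fitting_proj_id/fitting_mulmx_sub; rewrite -[P]mul1mx fitting_proj_sub.
have QTPB : (1%:M - P) *m T *m fitting_proj B = 0.
  exact/fitting_proj_0/mulT_sub.
have PAP : P *m A *m P = P *m A.
  apply: fitting_proj_id; rewrite -[P *m A]mul1mx mulmxA.
  apply: submx_trans (submxMr A (fitting_proj_sub _ _)) _.
  by rewrite mulmxE -exprSr exprS -mulmxE submxMl.
rewrite !SsE mulmxA mulmxDl PXPB QTPB addr0.
rewrite mulmxDr mulmxA PAP mulmxA mulmxBr mulmx1 PAP subrr mul0mx addr0.
by rewrite /A /B !mulmxA.
Qed.

End FittingPatch.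

Lemma Ss_mulmxC_similar (F : fieldType) n (X Y : 'M[F]_n) :
  similar_in unitmx (Ss (X *m Y)) (Ss (Y *m X)).
Proof.
have rkK : \rank (kermx ((Y *m X) ^+ n)) = \rank (kermx ((X *m Y) ^+ n)).
  by rewrite !mxrank_ker mxrank_fitting_mulmxC.
have [T sub_T inj_T] := mxrank_eq_iso rkK.
pose g := fitting_proj (Y *m X) *m Y + (1%:M - fitting_proj (Y *m X)) *m T.
have g_unit : g \in unitmx := fitting_patch_unitmx sub_T inj_T.
by exists g => //; apply/(similarP g_unit)/fitting_patch_conj.
Qed.

Section Conjugacy.
Variables (F : fieldType) (n : nat).
Implicit Types A B C : 'M[F]_n.

Lemma similar_in_refl A : similar_in unitmx A A.
Proof.
exists 1%:M; first exact: unitmx1.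
by apply/(similarP (unitmx1 _ _)); rewrite mul1mx mulmx1.
Qed.

Lemma similar_in_trans A B C :
  similar_in unitmx A B -> similar_in unitmx B C -> similar_in unitmx A C.
Proof.
move=> [p p_unit /(similarP p_unit) pAB] [q q_unit /(similarP q_unit) qBC].
have qp_unit : q *m p \in unitmx by rewrite unitmx_mul q_unit p_unit.
exists (q *m p) => //; apply/(similarP qp_unit).
by rewrite -mulmxA pAB !mulmxA qBC.
Qed.

Lemma similar_prim_conj A B : similar_in unitmx A B -> prim_conj A B.
Proof.
move=> [p p_unit /(similarRL p_unit) ->].
by exists (A *m invmx p), p; rewrite mulmxKV // mulmxA.
Qed.

Lemma prim_conj_sym : symmetric _ (@prim_conj F n).
Proof. by move=> A B [x [y [-> ->]]]; exists y, x. Qed.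

Lemma rt_prim_conj_similar_Ss A B :
  clos_refl_trans _ (@prim_conj F n) A B -> similar_in unitmx (Ss A) (Ss B).
Proof.
elim=> [x y [X [Y [-> ->]]]|x|x y z _ Sxy _ Syz].
- exact: Ss_mulmxC_similar.
- exact: similar_in_refl.
- exact: similar_in_trans Sxy Syz.
Qed.

Lemma exists_rt_prim_conj_rank_idem A :
  exists2 C, clos_refl_trans _ (@prim_conj F n) A C & \rank (C *m C) = \rank C.
Proof.
elim: {A}(\rank A).+1 {-2}A (ltnSn (\rank A)) => // r IHr A; rewrite ltnS => rkA.
have [rkAA|rkAA] := eqVneq (\rank (A *m A)) (\rank A).
  by exists A => //; apply: rt_refl.
pose P := pinvmx A *m A.
have AP : A *m P = A by rewrite mulmxA mulmxKpV.
have rkPA : (\rank (P *m A) < \rank A)%N.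
  rewrite -mulmxA (leq_ltn_trans (mxrankM_maxr _ _)) //.
  by rewrite ltn_neqAle rkAA mxrankM_maxl.
have [C PA_C rkC] := IHr (P *m A) (leq_trans rkPA rkA).
by exists C => //; apply: rt_trans PA_C; apply: rt_step; exists A, P; rewrite AP.
Qed.

Lemma rt_prim_conj_Ss A : clos_refl_trans _ (@prim_conj F n) A (Ss A).
Proof.
have [C AC rkC] := exists_rt_prim_conj_rank_idem A.
have := rt_prim_conj_similar_Ss AC; rewrite (Ss_id rkC).
by move=> /similar_prim_conj/prim_conj_sym CA; apply: rt_trans AC (rt_step _ _ _ _ CA).
Qed.

End Conjugacy.

Theorem theorem1 (F : fieldType) (n : nat) (hn : (1 <= n)%N) (A B : 'M[F]_n) :
  mx_conj A B <->
  exists g : 'M[F]_n, g \in unitmx /\ Ss B = g *m Ss A *m invmx g.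
Proof.
split=> [AB|[g [g_unit SsB]]].
- have := rt_prim_conj_similar_Ss (clos_t_clos_rt _ _ _ _ AB).
  by case=> p p_unit /(similarRL p_unit) SsB; exists p.
- have SsAB : prim_conj (Ss A) (Ss B).
    by apply: similar_prim_conj; exists g => //; apply/similarRL.
  apply: clos_rt_t (rt_prim_conj_Ss A) _; apply: clos_t_rt (t_step _ _ _ _ SsAB) _.
  exact: clos_rt_sym (@prim_conj_sym F n) _ _ (rt_prim_conj_Ss B).
Qed.
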